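(* Let $\mathcal P$ be a finite subset of $\mathcal W$ and let $P(1),P(2),P(3),\ldots$ be a sequence of matrices from $\mathcal P$. Suppose $j_1<j_2<\cdots$ is an infinite increasing sequence of indices such that each $P(j_r)$ is a Sarymsakov matrix. If there exists an integer $T$ such that $j_{r+1}-j_r\le T$ for all $r\ge1$, then $P(k)\cdots P(1)$ converges as $k\to\infty$ to a rank-one matrix $\mathbf 1c^T$ with $c_i\ge0$ and $\sum_i c_i=1$.
   Context: Let $\mathcal N=\{1,\ldots,n\}$; all matrices are $n\times n$. A matrix is stochastic if it is entrywise nonnegative with row sums $1$. For stochastic $P$ and $\mathcal A\subseteq\mathcal N$, $F_P(\mathcal A)=\{j:\ p_{ij}>0\text{ for some } i\in\mathcal A\}$. A Sarymsakov matrix is a stochastic $P$ such that for any disjoint nonempty $\mathcal A,\tilde{\mathcal A}\subseteq\mathcal N$, either $F_P(\mathcal A)\cap F_P(\tilde{\mathcal A})\neq\emptyset$, or $F_P(\mathcal A)\cap F_P(\tilde{\mathcal A})=\emptyset$ and $|F_P(\mathcal A)\cup F_P(\tilde{\mathcal A})|>|\mathcal A\cup\tilde{\mathcal A}|$. $\mathcal W$ is the set of stochastic $P$ such that for any disjoint nonempty $\mathcal A,\tilde{\mathcal A}\subseteq\mathcal N$, either $F_P(\mathcal A)\cap F_P(\tilde{\mathcal A})\neq\emptyset$, or $F_P(\mathcal A)\cap F_P(\tilde{\mathcal A})=\emptyset$ and $|F_P(\mathcal A)\cup F_P(\tilde{\mathcal A})|\ge|\mathcal A\cup\tilde{\mathcal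 A}|$. $\mathbf 1$ is the all-ones column vector. *)

From Stdlib Require Import Reals.
From HB Require Import structures.
From mathcomp Require Import all_boot.
Set Implicit Arguments. Unset Strict Implicit. Unset Printing Implicit Defensive.

Definition mat (n : nat) := 'I_n -> 'I_n -> R.

Definition rsum (n : nat) (f : 'I_n -> R) : R := \big[Rplus/R0]_(i < n) f i.

Definition mmul (n : nat) (A B : mat n) : mat n :=
  fun i j => rsum (fun k => Rmult (A i k) (B k j)).

Definition idm (n : nat) : mat n := fun i j => if i == j then R1 else R0.

Definition stochastic (n : nat) (P : mat n) : Prop :=
  (forall i j, Rle R0 (P i j)) /\ (forall i, rsum (P i) = R1).

Definition posb (x : R) : bool := if Rlt_dec R0 x then true else false.

Definition Fset (n : nat) (P : mat n) (A : {set 'I_n}) : {set 'I_n} :=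
  [set j | [exists i in A, posb (P i j)]].

Definition sarymsakov (n : nat) (P : mat n) : Prop :=
  stochastic P /\
  forall A B : {set 'I_n}, A != set0 -> B != set0 -> [disjoint A & B] ->
    (Fset P A :&: Fset P B != set0) \/
    (Fset P A :&: Fset P B = set0 /\ #|A :|: B| < #|Fset P A :|: Fset P B|).

Definition inW (n : nat) (P : mat n) : Prop :=
  stochastic P /\
  forall A B : {set 'I_n}, A != set0 -> B != set0 -> [disjoint A & B] ->
    (Fset P A :&: Fset P B != set0) \/
    (Fset P A :&: Fset P B = set0 /\ #|A :|: B| <= #|Fset P A :|: Fset P B|).

(* lprod Ps k = Ps k * Ps (k-1) * ... * Ps 1 (identity for k = 0). *)
Fixpoint lprod (n : nat) (Ps : nat -> mat n) (k : nat) : mat n :=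
  match k with
  | 0 => @idm n
  | S k' => mmul (Ps k) (lprod Ps k')
  end.

From Stdlib Require Import Reals FunctionalExtensionality.
From mathcomp Require Import all_boot all_order all_algebra.
From mathcomp Require Import Rstruct zify.
From mathcomp.algebra_tactics Require Import ring lra.
Set Implicit Arguments. Unset Strict Implicit. Unset Printing Implicit Defensive.
Import Order.TTheory GRing.Theory Num.Theory.
Local Open Scope ring_scope.

(* For disjoint nonempty A and B, a matrix of W maps them either to meeting
   supports or to disjoint supports that are at least as large in total, and a
   Sarymsakov matrix enlarges them strictly; these growth counts add up along
   products.  Hence a product containing n - 1 Sarymsakov factors is
   scrambling: any two of its rows share a positive column.  Bounded gaps put
   n - 1 Sarymsakov factors into every window of T (n - 1) consecutive
   factors, and as P is finite the positive entries of such a window product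
   are at least g = e^(T (n - 1)), e the least positive entry in P.  A
   scrambling stochastic matrix with this bound contracts the oscillation of
   every column by the factor 1 - g^2, so the columns of P(k)...P(1) flatten
   geometrically fast and the products converge to a matrix with equal
   stochastic rows. *)

Section StochasticMatrices.
Variable n : nat.
Implicit Types (P Q M : mat n) (A B : {set 'I_n}).

Lemma mmulE P Q i j : mmul P Q i j = \sum_(k < n) P i k * Q k j.
Proof. by []. Qed.

Lemma posbE x : posb x = (0 < x).
Proof. by rewrite /posb; case: Rlt_dec => [/RltP -> //|/RltP/negbTE -> //]. Qed.

Lemma stochastic_ge0 P i j : stochastic P -> 0 <= P i j.
Proof. by case=> hP _; apply/RleP. Qed.

Lemma stochastic_sum1 P i : stochastic P -> \sum_(k < n) P i k = 1.
Proof. by case=> _ hP; exact: hP. Qed.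

Lemma stochastic_le1 P i j : stochastic P -> P i j <= 1.
Proof.
move=> hP; rewrite -(stochastic_sum1 i hP) (bigD1 j) //= lerDl.
by apply: sumr_ge0 => k _; exact: stochastic_ge0.
Qed.

Lemma stochasticI P : (forall i j, 0 <= P i j) -> (forall i, \sum_(k < n) P i k = 1) ->
  stochastic P.
Proof. by move=> hge0 hsum; split=> [i j|i]; [apply/RleP|exact: hsum]. Qed.

Lemma psumr_gt0 (f : 'I_n -> R) : (forall i, 0 <= f i) ->
  (0 < \sum_(i < n) f i) = [exists i, 0 < f i].
Proof.
move=> hf; apply/idP/idP => [|/existsP[i hi]].
  apply: contraTT => /existsPn hn; rewrite -leNgt big1 // => i _.
  by apply/eqP; rewrite eq_le hf andbT leNgt hn.
by rewrite (bigD1 i) //=; apply: ltr_wpDr => //; exact: sumr_ge0.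
Qed.

Lemma stochastic_row_gt0 P i : stochastic P -> exists k, 0 < P i k.
Proof.
move=> hP; have : 0 < \sum_(k < n) P i k by rewrite stochastic_sum1 // ltr01.
by rewrite psumr_gt0 => [/existsP//|k]; exact: stochastic_ge0.
Qed.

Lemma mmul_gt0 P Q i j : stochastic P -> stochastic Q ->
  (0 < mmul P Q i j) = [exists k, (0 < P i k) && (0 < Q k j)].
Proof.
move=> hP hQ; have hP0 k : 0 <= P i k by exact: stochastic_ge0.
have hQ0 k : 0 <= Q k j by exact: stochastic_ge0.
rewrite mmulE psumr_gt0 => [|k]; last exact: mulr_ge0.
apply: eq_existsb => k; apply/idP/andP => [|[]]; last exact: mulr_gt0.
by rewrite lt_def mulf_eq0 negb_or => /andP[/andP[hPk hQk] _]; rewrite !lt_def hPk hQk hP0 hQ0.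
Qed.

Lemma inFset P A y : (y \in Fset P A) = [exists i in A, 0 < P i y].
Proof. by rewrite inE; apply: eq_existsb => i; rewrite posbE. Qed.

Lemma Fset_mmul P Q A : stochastic P -> stochastic Q ->
  Fset (mmul P Q) A = Fset Q (Fset P A).
Proof.
move=> hP hQ; apply/setP => y; rewrite !inFset.
apply/existsP/existsP => -[x /andP[xA hx]].
  move: hx; rewrite mmul_gt0 // => /existsP[k /andP[hxk hky]].
  by exists k; rewrite hky andbT inFset; apply/existsP; exists x; rewrite xA.
move: xA; rewrite inFset => /existsP[i /andP[iA hi]].
by exists i; rewrite iA mmul_gt0 //; apply/existsP; exists x; rewrite hi hx.
Qed.

Lemma Fset_idm A : Fset (@idm n) A = A.
Proof.
apply/setP => y; rewrite inFset; apply/existsP/idP => [[x /andP[xA]]|yA].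
  by rewrite /idm; case: eqP => [<- //|_]; rewrite ltxx.
by exists y; rewrite yA /idm eqxx /=; exact: ltr01.
Qed.

Lemma Fset_neq0 P A : stochastic P -> A != set0 -> Fset P A != set0.
Proof.
move=> hP /set0Pn[x xA]; have [k hk] := stochastic_row_gt0 x hP.
by apply/set0Pn; exists k; rewrite inFset; apply/existsP; exists x; rewrite xA.
Qed.

Lemma FsetI_neq0 P A B : stochastic P -> A :&: B != set0 ->
  Fset P A :&: Fset P B != set0.
Proof.
move=> hP /set0Pn[x]; rewrite inE => /andP[xA xB].
have [k hk] := stochastic_row_gt0 x hP.
by apply/set0Pn; exists k; rewrite inE !inFset; apply/andP; split;
  apply/existsP; exists x; rewrite ?xA ?xB.
Qed.

Lemma mmulA P Q M : mmul (mmul P Q) M = mmul P (mmul Q M).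
Proof.
apply: functional_extensionality_dep => i; apply: functional_extensionality_dep => j.
rewrite !mmulE; under eq_bigr => k _ do rewrite mmulE big_distrl /=.
rewrite exchange_big /=; apply: eq_bigr => l _; rewrite mmulE big_distrr /=.
by apply: eq_bigr => k _; rewrite mulrA.
Qed.

Lemma mmul1l M : mmul (@idm n) M = M.
Proof.
apply: functional_extensionality_dep => i; apply: functional_extensionality_dep => j.
rewrite mmulE (bigD1 i) //= big1 ?addr0 /idm ?eqxx ?mul1r // => k.
by rewrite eq_sym => /negbTE ->; rewrite mul0r.
Qed.

Lemma stochastic_mmul P Q : stochastic P -> stochastic Q -> stochastic (mmul P Q).
Proof.
move=> hP hQ; apply: stochasticI => [i j|i].
  by rewrite mmulE; apply: sumr_ge0 => k _; apply: mulr_ge0; exact: stochastic_ge0.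
under eq_bigr => j _ do rewrite mmulE.
rewrite exchange_big /= -(stochastic_sum1 i hP); apply: eq_bigr => k _.
by rewrite -big_distrr /= stochastic_sum1 // mulr1.
Qed.

Lemma stochastic_idm : stochastic (@idm n).
Proof.
apply: stochasticI => [i j|i].
  by rewrite /idm; case: eqP => _; [exact: ler01|exact: lexx].
rewrite (bigD1 i) //= big1 ?addr0 /idm ?eqxx // => k.
by rewrite eq_sym => /negbTE ->.
Qed.

End StochasticMatrices.

Section Products.
Variables (n : nat) (P : nat -> mat n).

Lemma lprodD a m :
  lprod P (a + m) = mmul (lprod (fun t => P (a + t)%N) m) (lprod P a).
Proof.
elim: m => [|m IH]; first by rewrite addn0 /= mmul1l.
by rewrite addnS /= IH -mmulA addnS.
Qed.

Hypothesis stochastic_P : forall t, (0 < t)%N -> stochastic (P t).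

Lemma stochastic_lprod m : stochastic (lprod P m).
Proof.
elim: m => [|m IH] /=; first exact: stochastic_idm.
by apply: stochastic_mmul => //; exact: stochastic_P.
Qed.

Lemma lprod_ge_expn (e : R) : 0 <= e ->
  (forall t, (0 < t)%N -> forall i j, 0 < P t i j -> e <= P t i j) ->
  forall m i j, 0 < lprod P m i j -> e ^+ m <= lprod P m i j.
Proof.
move=> he hPe; elim=> [|m IH] i j /=.
  by rewrite /idm expr0; case: eqP => _; rewrite ?lexx ?ltxx.
have hPm := stochastic_P (ltn0Sn m); have hprod := stochastic_lprod m.
rewrite mmul_gt0 // => /existsP[k /andP[hik hkj]].
rewrite mmulE (bigD1 k) //= -[e ^+ m.+1]addr0 exprS; apply: lerD.
  by apply: ler_pM; [|exact: exprn_ge0|exact: hPe|exact: IH].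
by apply: sumr_ge0 => l _; apply: mulr_ge0; exact: stochastic_ge0.
Qed.

End Products.

Section Expansion.
Variable n : nat.
Implicit Types (M X Y : mat n).

(* W is [expands 0] and the Sarymsakov matrices are [expands 1]. *)
Definition expands (k : nat) M : Prop :=
  forall A B : {set 'I_n}, A != set0 -> B != set0 -> [disjoint A & B] ->
  Fset M A :&: Fset M B != set0 \/ (#|A :|: B| + k <= #|Fset M A :|: Fset M B|)%N.

Lemma expands_le k l M : (l <= k)%N -> expands k M -> expands l M.
Proof.
move=> lk hM A B hA hB hAB; case: (hM A B hA hB hAB) => [|grow]; first by left.
by right; apply: leq_trans grow; rewrite leq_add2l.
Qed.

Lemma inW_expands0 M : inW M -> expands 0 M.
Proof.
by case=> _ hM A B hA hB hAB; case: (hM A B hA hB hAB) => [|[_ grow]];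
  [left|right; rewrite addn0].
Qed.

Lemma sarymsakov_expands1 M : sarymsakov M -> expands 1 M.
Proof.
by case=> _ hM A B hA hB hAB; case: (hM A B hA hB hAB) => [|[_ grow]];
  [left|right; rewrite addn1].
Qed.

Lemma expands_idm : expands 0 (@idm n).
Proof. by move=> A B _ _ _; right; rewrite !Fset_idm addn0. Qed.

Lemma expands_mmul k l X Y : stochastic X -> stochastic Y ->
  expands k X -> expands l Y -> expands (k + l) (mmul X Y).
Proof.
move=> hX hY eX eY A B hA hB hAB; rewrite !Fset_mmul //.
have [meet|disj] := boolP (Fset X A :&: Fset X B != set0).
  by left; apply: FsetI_neq0.
have growX : (#|A :|: B| + k <= #|Fset X A :|: Fset X B|)%N.
  by case: (eX A B hA hB hAB) => // meet; rewrite meet in disj.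
have hAB' : [disjoint Fset X A & Fset X B] by rewrite -setI_eq0; exact: negbNE.
case: (eY _ _ (Fset_neq0 hX hA) (Fset_neq0 hX hB) hAB') => [|growY]; first by left.
by right; rewrite addnA; apply: leq_trans growY; rewrite leq_add2r.
Qed.

Lemma expands_scrambling M : stochastic M -> expands n.-1 M ->
  forall i i', exists k, 0 < M i k /\ 0 < M i' k.
Proof.
move=> hM eM i i'; have [<-|ne] := eqVneq i i'.
  by have [k hk] := stochastic_row_gt0 i hM; exists k.
have set1_neq0 (x : 'I_n) : [set x] != set0 by apply/set0Pn; exists x; rewrite inE.
have hD : [disjoint [set i] & [set i']] by rewrite disjoints1 inE.
case: (eM _ _ (set1_neq0 i) (set1_neq0 i') hD) => [|grow].
  case/set0Pn => k; rewrite inE !inFset.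
  case/andP => /existsP[x /andP[xi hx]] /existsP[y /andP[yi hy]].
  by move: xi yi hx hy; rewrite !inE => /eqP -> /eqP ->; exists k.
have := max_card (Fset M [set i] :|: Fset M [set i']).
rewrite cards2 ne card_ord /= in grow *; have := ltn_ord i; lia.
Qed.

Lemma lprod_expands (Q : nat -> mat n) (w : nat -> nat) m :
  (forall t, (0 < t)%N -> stochastic (Q t)) ->
  (forall t, (0 < t)%N -> expands (w t) (Q t)) ->
  expands (\sum_(1 <= t < m.+1) w t) (lprod Q m).
Proof.
move=> hQ eQ; elim: m => [|m IH]; first by rewrite big_geq //; exact: expands_idm.
rewrite big_nat_recr //= addnC; apply: expands_mmul => //.
- exact: hQ.
- exact: stochastic_lprod.
- exact: eQ.
Qed.

End Expansion.

Definition osc_cols_le n (M : mat n) (d : R) := forall j i i', M i j - M i' j <= d.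
Arguments osc_cols_le {n} M d%_ring_scope.

Section Oscillation.
Variable n : nat.
Implicit Types (B M : mat n).

Lemma osc_cols_le_norm M d j i i' : osc_cols_le M d -> `|M i j - M i' j| <= d.
Proof. by move=> hM; rewrite ler_norml lerNl opprB !hM. Qed.

Lemma stochastic_osc_cols_le1 M : stochastic M -> osc_cols_le M 1.
Proof.
move=> hM j i i'.
by have := stochastic_le1 i j hM; have := stochastic_ge0 i' j hM; lra.
Qed.

Lemma double_sum_stochastic B i i' (d : R) : stochastic B ->
  \sum_l \sum_l' B i l * B i' l' * d = d.
Proof.
move=> hB; under eq_bigr => l _ do rewrite -big_distrl -big_distrr /= stochastic_sum1 // mulr1.
by rewrite -big_distrl /= stochastic_sum1 // mul1r.
Qed.

Lemma mmul_sub_double_sum B M j i i' : stochastic B ->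
  mmul B M i j - mmul B M i' j =
  \sum_l \sum_l' B i l * B i' l' * (M l j - M l' j).
Proof.
move=> hB; rewrite !mmulE.
transitivity (\sum_l \sum_l' (B i l * M l j * B i' l' - B i l * (B i' l' * M l' j)));
  last by apply: eq_bigr => l _; apply: eq_bigr => l' _; ring.
symmetry; under eq_bigr => l _ do rewrite sumrB -!big_distrr /= stochastic_sum1 // mulr1.
by rewrite big_split /= sumrN -big_distrl /= stochastic_sum1 // mul1r.
Qed.

Lemma osc_cols_le_mmul B M d : stochastic B -> osc_cols_le M d ->
  osc_cols_le (mmul B M) d.
Proof.
move=> hB hM j i i'; rewrite mmul_sub_double_sum // -(double_sum_stochastic i i' d hB).
apply: ler_sum => l _; apply: ler_sum => l' _; apply: ler_wpM2l => //.
by apply: mulr_ge0; exact: stochastic_ge0.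
Qed.

(* The pair (k, k) of a common positive column carries weight at least g^2
   and contributes nothing to the difference of the two rows. *)
Lemma osc_cols_le_mmul_contract B M d g : stochastic B -> osc_cols_le M d -> 0 <= g ->
  (forall i i', exists k, g <= B i k /\ g <= B i' k) ->
  osc_cols_le (mmul B M) ((1 - g ^+ 2) * d).
Proof.
move=> hB hM hg hscr j i i'; have [k [hik hi'k]] := hscr i i'.
have hd : 0 <= d by have := hM j k k; rewrite subrr.
pose w (p : 'I_n * 'I_n) := B i p.1 * B i' p.2.
have hw p : 0 <= w p by apply: mulr_ge0; exact: stochastic_ge0.
have hwkk : g ^+ 2 <= w (k, k) by rewrite expr2; apply: ler_pM.
have total : \sum_(p | p != (k, k)) w p * d = d - w (k, k) * d.
  have := double_sum_stochastic i i' d hB.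
  rewrite (pair_bigA _ (fun l l' => B i l * B i' l' * d)) (bigD1 (k, k)) //= => hsum.
  by rewrite -[X in X - _]hsum /w /= addrAC subrr add0r.
rewrite mmul_sub_double_sum //.
rewrite (pair_bigA _ (fun l l' => B i l * B i' l' * (M l j - M l' j))) /=.
rewrite (bigD1 (k, k)) //= subrr mulr0 add0r.
apply: (@le_trans _ _ (\sum_(p | p != (k, k)) w p * d)).
  by apply: ler_sum => p _; apply: ler_wpM2l; [exact: hw|exact: hM].
by rewrite total; have := ler_wpM2r hd hwkk; lra.
Qed.

Lemma mmul_near B M d i j : stochastic B -> osc_cols_le M d ->
  `|mmul B M i j - M i j| <= d.
Proof.
move=> hB hM.
have -> : mmul B M i j - M i j = \sum_l B i l * (M l j - M i j).
  under [RHS]eq_bigr do rewrite mulrBr.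
  by rewrite sumrB -big_distrl /= stochastic_sum1 // mul1r.
rewrite -[d]mul1r -(stochastic_sum1 i hB) big_distrl /=.
apply: le_trans (ler_norm_sum _ _ _) _; apply: ler_sum => l _.
rewrite normrM ger0_norm ?stochastic_ge0 //.
by apply: ler_wpM2l; [exact: stochastic_ge0|exact: osc_cols_le_norm].
Qed.

End Oscillation.

Section Limits.

Lemma RdistE (x y : R) : Rdist x y = `|x - y|.
Proof. by []. Qed.

Lemma Un_cv_const (x : R) : Un_cv (fun _ => x) x.
Proof. by move=> eps heps; exists 0%N => k _; rewrite RdistE subrr normr0. Qed.

Lemma Un_cv_sum (I : Type) (r : seq I) (f : I -> nat -> R) (l : I -> R) :
  (forall x, Un_cv (f x) (l x)) ->
  Un_cv (fun k => \sum_(x <- r) f x k) (\sum_(x <- r) l x).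
Proof.
move=> hf; elim: r => [|x r IH] eps heps.
  by exists 0%N => k _; rewrite !big_nil RdistE subrr normr0.
have [N hN] := CV_plus _ _ _ _ (hf x) IH eps heps.
by exists N => k hk; rewrite !big_cons; exact: hN.
Qed.

Lemma exists_expr_lt (r eps : R) : 0 <= r -> r < 1 -> 0 < eps ->
  exists q, r ^+ q < eps.
Proof.
move=> r0 r1 heps.
have hr : Rabs r < 1 by rewrite -[Rabs r]/`|r| ger0_norm.
have [q hq] := pow_lt_1_zero r (elimT RltP hr) eps (elimT RltP heps).
exists q; have /RltP := hq q (le_n q).
by rewrite RpowE (_ : Rabs _ = `|r ^+ q|) // ger0_norm // exprn_ge0.
Qed.

Variable n : nat.

Lemma uniform_cauchy_cv (u : nat -> mat n) (i0 : 'I_n) :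
  (forall eps, 0 < eps -> exists N, forall k k' i i' j,
     (N <= k)%N -> (N <= k')%N -> `|u k i j - u k' i' j| < eps) ->
  exists c : 'I_n -> R, forall i j, Un_cv (fun k => u k i j) (c j).
Proof.
move=> hu.
have cauchy j : Cauchy_crit (fun k => u k i0 j).
  move=> eps /RltP heps; have [N hN] := hu eps heps.
  by exists N => a b /ssrnat.leP ha /ssrnat.leP hb; apply/RltP; rewrite RdistE; exact: hN.
exists (fun j => proj1_sig (R_complete _ (cauchy j))) => i j eps heps.
have hc := proj2_sig (R_complete _ (cauchy j)).
have {}heps : 0 < eps by apply/RltP.
have heps2 : 0 < eps / 2 by lra.
have [N1 h1] := hu _ heps2; have [N2 h2] := hc _ (elimT RltP heps2).
exists (maxn N1 N2) => k /ssrnat.leP hk; apply/RltP; rewrite RdistE.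
have /RltP := h2 k ltac:(apply/ssrnat.leP; exact: leq_trans (leq_maxr _ _) hk).
have := h1 k k i i0 j (leq_trans (leq_maxl _ _) hk) (leq_trans (leq_maxl _ _) hk).
rewrite RdistE !ltr_norml => /andP[a1 a2] /andP[b1 b2].
by apply/andP; split; lra.
Qed.

Lemma stochastic_cv_limit (u : nat -> mat n) (c : 'I_n -> R) i :
  (forall k, stochastic (u k)) -> (forall j, Un_cv (fun k => u k i j) (c j)) ->
  (forall j, 0 <= c j) /\ \sum_j c j = 1.
Proof.
move=> hu hc; split=> [j|].
  apply/RleP; apply: (Rle_cv_lim _ (Un_cv_const 0) (hc j)) => k.
  by apply/RleP; exact: stochastic_ge0.
have h1 : Un_cv (fun k => \sum_j u k i j) 1.
  by move=> eps heps; exists 0%N => k _; rewrite stochastic_sum1 // RdistE subrr normr0.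
exact: UL_sequence (Un_cv_sum (f := fun j k => u k i j) _ hc) h1.
Qed.

End Limits.

Lemma increasing_bracket (j : nat -> nat) a :
  (forall r, 0 < r -> j r < j r.+1)%N -> (j 1 <= a)%N ->
  exists2 r, (0 < r)%N & (j r <= a < j r.+1)%N.
Proof.
move=> hinc; elim: a => [|a IH] ha.
  by exists 1%N => //; have := hinc 1%N isT; lia.
have [/IH [r r0 /andP[jr ajr]]|ha'] := leqP (j 1%N) a.
  have [lt|ge] := ltnP a.+1 (j r.+1); first by exists r => //; lia.
  by exists r.+1 => //; have := hinc r.+1 isT; lia.
by exists 1%N => //; have := hinc 1%N isT; lia.
Qed.

Lemma exists_pos_lb (l : list R) : exists e : R, [/\ 0 < e, e <= 1 &
  forall x, List.In x l -> 0 < x -> e <= x].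
Proof.
elim: l => [|a l [e [he he1 hl]]]; first by exists 1; split; [exact: ltr01|exact: lexx|].
have [ha|ha] := boolP (0 < a).
  exists (Num.min e a); split; first by rewrite lt_min he ha.
    by rewrite ge_min he1.
  by move=> x /= [<-|hx] hx0; rewrite ge_min ?lexx ?orbT // hl.
exists e; split => // x /= [<-|hx] hx0; first by rewrite hx0 in ha.
exact: hl.
Qed.

Lemma In_mem (T : eqType) (x : T) (s : seq T) : x \in s -> List.In x s.
Proof. by elim: s => //= a s IH; rewrite inE => /orP[/eqP->|/IH]; [left|right]. Qed.

Lemma exists_entry_lb n (Ms : list (mat n)) : exists e : R, [/\ 0 < e, e <= 1 &
  forall M, List.In M Ms -> forall i j, 0 < M i j -> e <= M i j].
Proof.
have [e [he he1 hl]] := exists_pos_lb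
  (List.flat_map (fun M : mat n => List.map (fun p : 'I_n * 'I_n => M p.1 p.2)
     (enum {: 'I_n * 'I_n})) Ms).
exists e; split => // M hM i j hij; apply: hl => //.
apply/List.in_flat_map; exists M; split => //.
apply: (List.in_map (fun p : 'I_n * 'I_n => M p.1 p.2) _ (i, j)).
by apply: In_mem; rewrite mem_enum.
Qed.

Section BoundedGaps.
Variables (n : nat) (P : nat -> mat n) (e : R) (j : nat -> nat) (T : nat).
Hypotheses (hPW : forall t, (0 < t)%N -> inW (P t)) (he : 0 < e) (he1 : e <= 1)
  (hPe : forall t, (0 < t)%N -> forall i k, 0 < P t i k -> e <= P t i k)
  (hjinc : forall r, (0 < r)%N -> (j r < j r.+1)%N)
  (hsar : forall r, (0 < r)%N -> sarymsakov (P (j r)))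
  (hT : forall r, (0 < r)%N -> (j r.+1 - j r <= T)%N).

Local Notation L := (T * n.-1)%N.
Local Notation rho := (1 - (e ^+ L) ^+ 2).

Lemma stochastic_shift a t : (0 < t)%N -> stochastic (P (a + t)%N).
Proof. by move=> ht; case: (hPW (ltn_addl a ht)). Qed.

Lemma window_expands a : (j 1 <= a)%N -> expands 1 (lprod (fun t => P (a + t)%N) T).
Proof.
move=> ha; have [r r0 /andP[jr ajr]] := increasing_bracket hjinc ha.
have gap := hT r0.
pose w t := nat_of_bool (a + t == j r.+1)%N.
apply: (@expands_le _ (\sum_(1 <= t < T.+1) w t)%N).
  have t0_in : ((j r.+1 - a)%N \in index_iota 1 T.+1) by rewrite mem_index_iota; lia.
  rewrite (bigD1_seq _ t0_in (iota_uniq _ _)) /w subnKC ?eqxx //; exact: ltnW.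
apply: lprod_expands => t ht; first exact: stochastic_shift.
rewrite /w; case: eqP => [->|_].
  by apply: sarymsakov_expands1; exact: hsar.
by apply: inW_expands0; apply: hPW; exact: ltn_addl.
Qed.

Lemma windows_expand q a : (j 1 <= a)%N ->
  expands q (lprod (fun t => P (a + t)%N) (T * q)).
Proof.
elim: q a => [|q IH] a ha; first by rewrite muln0; exact: expands_idm.
rewrite mulnS addnC lprodD /=.
have -> : (fun t => P (a + (T * q + t))%N) = (fun t => P (a + T * q + t)%N).
  by apply: functional_extensionality => t; rewrite addnA.
rewrite -add1n; apply: expands_mmul.
- exact: stochastic_lprod (stochastic_shift (a + T * q)) _.
- exact: stochastic_lprod (stochastic_shift a) _.
- by apply: window_expands; exact: leq_trans ha (leq_addr _ _).
- exact: IH.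
Qed.

Lemma window_scrambling a i i' : (j 1 <= a)%N ->
  exists k, e ^+ L <= lprod (fun t => P (a + t)%N) L i k /\
            e ^+ L <= lprod (fun t => P (a + t)%N) L i' k.
Proof.
move=> ha; have hstoch := stochastic_lprod (stochastic_shift a) L.
have [k [hik hi'k]] := expands_scrambling hstoch (windows_expand n.-1 ha) i i'.
have hPe_shift t : (0 < t)%N -> forall i k, 0 < P (a + t)%N i k -> e <= P (a + t)%N i k.
  by move=> ht; apply: hPe; exact: ltn_addl.
by exists k; split; apply: lprod_ge_expn (stochastic_shift a) _ (ltW he) hPe_shift _ _ _ _.
Qed.

Lemma osc_cols_lprod_window a d : (j 1 <= a)%N -> osc_cols_le (lprod P a) d ->
  osc_cols_le (lprod P (a + L)) (rho * d).
Proof.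
move=> ha hd; rewrite lprodD; apply: osc_cols_le_mmul_contract => //.
- exact: stochastic_lprod (stochastic_shift a) L.
- exact: exprn_ge0 (ltW he).
- by move=> i i'; exact: window_scrambling.
Qed.

Lemma osc_cols_lprod_geometric q k : (j 1 + q * L <= k)%N ->
  osc_cols_le (lprod P k) (rho ^+ q).
Proof.
move=> hk; rewrite -(subnKC hk) lprodD.
apply: osc_cols_le_mmul; first exact: stochastic_lprod (stochastic_shift _) _.
elim: q {hk} => [|q IH].
  by rewrite mul0n addn0 expr0; apply: stochastic_osc_cols_le1;
    exact: stochastic_lprod (stochastic_shift 0) _.
rewrite mulSn addnCA addnC exprS; apply: osc_cols_lprod_window => //.
exact: leq_addr.
Qed.

Lemma lprod_cauchy eps : 0 < eps -> exists N, forall k k' i i' jj,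
  (N <= k)%N -> (N <= k')%N -> `|lprod P k i jj - lprod P k' i' jj| < eps.
Proof.
move=> heps; have hg : 0 < e ^+ L by exact: exprn_gt0.
have hg1 : e ^+ L <= 1 by apply: exprn_ile1 => //; exact: ltW.
have hg2 : 0 < (e ^+ L) ^+ 2 by exact: exprn_gt0.
have hg21 : (e ^+ L) ^+ 2 <= 1 by exact: exprn_ile1 (ltW hg) hg1.
have [q hq] : exists q, rho ^+ q < eps / 2 by apply: exists_expr_lt; lra.
exists (j 1 + q * L)%N => k k' i i' jj hk hk'.
wlog hkk' : k k' i i' hk hk' / (k <= k')%N.
  move=> hwlog; case/orP: (leq_total k k') => ?; first exact: hwlog.
  by rewrite distrC; exact: hwlog.
have rows := osc_cols_le_norm jj i i' (osc_cols_lprod_geometric hk).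
have later : `|lprod P k' i' jj - lprod P k i' jj| <= rho ^+ q.
  rewrite -(subnKC hkk') lprodD; apply: mmul_near.
    exact: stochastic_lprod (stochastic_shift _) _.
  exact: osc_cols_lprod_geometric.
rewrite distrC in later; have := ler_distD (lprod P k i' jj) (lprod P k i jj) (lprod P k' i' jj).
lra.
Qed.

End BoundedGaps.

Local Close Scope ring_scope.

Theorem corollary1 (n : nat) (Hn : 0 < n)
  (Pset : list (mat n)) (HPset : forall M, List.In M Pset -> inW M)
  (Pseq : nat -> mat n) (HPseq : forall k, 1 <= k -> List.In (Pseq k) Pset)
  (j : nat -> nat) (Hj1 : 1 <= j 1)
  (Hjinc : forall r, 1 <= r -> j r < j r.+1)
  (Hsar : forall r, 1 <= r -> sarymsakov (Pseq (j r)))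
  (T : nat) (HT : forall r, 1 <= r -> j r.+1 - j r <= T) :
  exists c : 'I_n -> R,
    (forall i, Rle R0 (c i)) /\ rsum c = R1 /\
    (forall i i', Un_cv (fun k => lprod Pseq k i i') (c i')).
Proof.
have [e [he he1 hPset_lb]] := exists_entry_lb Pset.
have hW t : 0 < t -> inW (Pseq t) by move=> ht; exact/HPset/HPseq.
have hPe t : 0 < t -> forall i k, (0 < Pseq t i k)%R -> (e <= Pseq t i k)%R.
  by move=> ht; apply: hPset_lb; exact: HPseq.
have [c hc] := uniform_cauchy_cv (Ordinal Hn) (lprod_cauchy hW he he1 hPe Hjinc Hsar HT).
have [c_ge0 c_sum1] := stochastic_cv_limit (stochastic_lprod (stochastic_shift hW 0))
  (hc (Ordinal Hn)).
by exists c; split=> [i|]; [apply/RleP|split].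
Qed.
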